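(* Let $\Lambda$ be any lattice in $\mathbb{E}^3$ whose shortest non-zero lattice vector has length $2$. Then for every integer $n\ge 2$, $$C_{\Lambda}(n) < 6n-\frac{3\sqrt[3]{18\pi}}{\pi}\,n^{2/3} = 6n-3.665\ldots\, n^{2/3}.$$
   Context: A lattice in $\mathbb{E}^3$ is the set of integer linear combinations of three fixed linearly independent vectors. A packing of unit balls is a family of closed unit balls with pairwise disjoint interiors; its contact number is the number of unordered pairs of balls that touch (centers at distance exactly $2$). $C_\Lambda(n)$ denotes the largest contact number among all packings of $n$ unit balls in $\mathbb{E}^3$ all of whose centers are points of $\Lambda$. *)

From Stdlib Require Import Reals List.
Import ListNotations.
Open Scope R_scope.

Definition pt := (R * R * R)%type.

Definition vadd (u v : pt) : pt :=
  let '(a1, a2, a3) := u in let '(b1, b2, b3) := v in (a1 + b1, a2 + b2, a3 + b3).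
Definition vscale (c : R) (u : pt) : pt :=
  let '(a1, a2, a3) := u in (c * a1, c * a2, c * a3).
Definition vzero : pt := (0, 0, 0).

Definition vnorm (u : pt) : R :=
  let '(a1, a2, a3) := u in sqrt (a1 ^ 2 + a2 ^ 2 + a3 ^ 2).
Definition dist3 (u v : pt) : R := vnorm (vadd u (vscale (-1) v)).

Definition lin_indep3 (b1 b2 b3 : pt) : Prop :=
  forall x y z : R,
    vadd (vadd (vscale x b1) (vscale y b2)) (vscale z b3) = vzero ->
    x = 0 /\ y = 0 /\ z = 0.

Definition in_lattice (b1 b2 b3 : pt) (v : pt) : Prop :=
  exists k1 k2 k3 : Z,
    v = vadd (vadd (vscale (IZR k1) b1) (vscale (IZR k2) b2)) (vscale (IZR k3) b3).

Definition min_norm_two (b1 b2 b3 : pt) : Prop :=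
  (forall v, in_lattice b1 b2 b3 v -> v <> vzero -> 2 <= vnorm v) /\
  (exists v, in_lattice b1 b2 b3 v /\ v <> vzero /\ vnorm v = 2).

(* A packing of unit balls given by the list of its centers: distinct
   centers, closed unit balls with pairwise disjoint interiors, i.e.
   centers at pairwise distance >= 2. *)
Definition unit_ball_packing (c : list pt) : Prop :=
  NoDup c /\
  forall i j, (i < length c)%nat -> (j < length c)%nat -> i <> j ->
    2 <= dist3 (nth i c vzero) (nth j c vzero).

Definition lattice_packing (b1 b2 b3 : pt) (c : list pt) : Prop :=
  unit_ball_packing c /\ Forall (in_lattice b1 b2 b3) c.

Definition touchb (p q : pt) : bool :=
  if Req_EM_T (dist3 p q) 2 then true else false.

Fixpoint contact_number (c : list pt) : nat :=
  match c with
  | [] => 0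
  | p :: t => (length (filter (touchb p) t) + contact_number t)%nat
  end.

From Stdlib Require Import Reals List Permutation Lra Lia Psatz ZArith Bool Wf_nat.
From Stdlib Require FinFun.
Import ListNotations.

(* Write lattice points in coordinates z in Z^3 and let qf z be the squared
   length of the point.  Even vectors 2w have qf >= 16, so the difference of
   two touching centres is a minimal vector (qf = 4) of nonzero parity class in
   (Z/2)^3, and each class contains at most one pair +-d of minimal vectors.
   Hence the contacts of a class c form disjoint paths along lines parallel to
   d_c, and N_c + L_c <= n, where N_c counts these contacts and L_c the lines
   met by the packing.  A computation with inner products shows the seven
   nonzero classes cannot all contain minimal vectors.  For three classes
   independent over F_2, the vectors d_a, d_b, d_c are independent, the line
   counts are the sizes of the projections of the packing along them, and a
   Loomis-Whitney inequality gives L_a + L_b + L_c >= 3 n^(2/3).  The bound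
   follows by distributing the at most six occurring classes into
   independent triples. *)

Section PairCount.
Context {A : Type}.
Local Open Scope nat_scope.

Fixpoint pair_count (r : A -> A -> bool) (l : list A) : nat :=
  match l with
  | [] => 0
  | p :: t => length (filter (r p) t) + pair_count r t
  end.

Lemma length_filter_Permutation (f : A -> bool) l l' :
  Permutation l l' -> length (filter f l) = length (filter f l').
Proof.
  induction 1; simpl; auto.
  - destruct (f x); simpl; auto.
  - destruct (f x), (f y); simpl; auto.
  - congruence.
Qed.

Lemma pair_count_Permutation (r : A -> A -> bool) l l' :
  (forall x y, r x y = r y x) -> Permutation l l' -> pair_count r l = pair_count r l'.
Proof.
  intros r_sym HP; induction HP; simpl; auto.
  - rewrite (length_filter_Permutation (r x) _ _ HP); lia.
  - rewrite (r_sym x y); destruct (r y x); simpl; lia.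
  - congruence.
Qed.

Lemma pair_count_false (r : A -> A -> bool) l :
  (forall x y, r x y = false) -> pair_count r l = 0.
Proof.
  intros r_false; induction l as [|a l IH]; simpl; auto.
  rewrite IH, (filter_ext _ _ (r_false a)), filter_false; reflexivity.
Qed.

Lemma pair_count_pos (r : A -> A -> bool) l :
  0 < pair_count r l -> exists x y, In x l /\ In y l /\ r x y = true.
Proof.
  induction l as [|a l IH]; simpl; intros Hpos; [lia|].
  destruct (filter (r a) l) as [|y m] eqn:Ha; simpl in Hpos.
  - destruct (IH Hpos) as (x & z & ? & ? & ?); exists x, z; auto.
  - assert (Hy : In y (filter (r a) l)) by (rewrite Ha; now left).
    apply filter_In in Hy; exists a, y; tauto.
Qed.

Definition image_card {U} (Ud : forall x y : U, {x = y} + {x <> y}) (f : A -> U) (l : list A) :=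
  length (nodup Ud (map f l)).

Lemma image_card_equiv {U} Ud (f : A -> U) l l' :
  (forall x, In x l <-> In x l') -> image_card Ud f l = image_card Ud f l'.
Proof.
  intros Hl; unfold image_card; apply Nat.le_antisymm;
    apply NoDup_incl_length; try apply NoDup_nodup; intros u;
    rewrite !nodup_In, !in_map_iff; intros [x [<- Hx]]; exists x; split; auto; apply Hl; auto.
Qed.

Lemma image_card_incl {U} Ud (f : A -> U) l l' :
  incl l l' -> image_card Ud f l <= image_card Ud f l'.
Proof.
  intros Hl; unfold image_card; apply NoDup_incl_length; try apply NoDup_nodup.
  intros u; rewrite !nodup_In, !in_map_iff; intros [x [<- Hx]]; exists x; auto.
Qed.

Lemma image_card_injective {U} Ud (f : A -> U) l :
  NoDup l -> (forall x y, In x l -> In y l -> f x = f y -> x = y) ->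
  image_card Ud f l = length l.
Proof.
  intros Hl f_inj; unfold image_card; rewrite nodup_fixed_point.
  - apply length_map.
  - apply FinFun.Injective_map_NoDup_in; auto.
Qed.

Lemma image_card_cons {U} Ud (f : A -> U) p l :
  image_card Ud f (p :: l) =
  if in_dec Ud (f p) (map f l) then image_card Ud f l else S (image_card Ud f l).
Proof. unfold image_card; simpl; destruct (in_dec Ud (f p) (map f l)); reflexivity. Qed.

Lemma image_card_app {U} Ud (f : A -> U) l l' :
  (forall x y, In x l -> In y l' -> f x <> f y) ->
  image_card Ud f (l ++ l') = image_card Ud f l + image_card Ud f l'.
Proof.
  intros Hdisj; unfold image_card; rewrite <- length_app; apply Nat.le_antisymm;
    apply NoDup_incl_length; try apply NoDup_nodup.
  - intros u; rewrite in_app_iff, !nodup_In, map_app, in_app_iff; tauto.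
  - apply NoDup_app; try apply NoDup_nodup.
    intros u Hu Hu'; rewrite nodup_In, in_map_iff in Hu, Hu'.
    destruct Hu as [x [<- Hx]], Hu' as [y [Hy Hy']]; exact (Hdisj x y Hx Hy' (eq_sym Hy)).
  - intros u; rewrite in_app_iff, !nodup_In, map_app, in_app_iff; tauto.
Qed.

Lemma image_card_filter_split {U} Ud (f : A -> U) (P : A -> bool) l :
  (forall x y, In x l -> In y l -> f x = f y -> P x = P y) ->
  image_card Ud f l =
  image_card Ud f (filter P l) + image_card Ud f (filter (fun x => negb (P x)) l).
Proof.
  intros HP; rewrite <- image_card_app.
  - apply image_card_equiv; intros x; rewrite in_app_iff, !filter_In.
    destruct (P x); simpl; tauto.
  - intros x y Hx Hy E; rewrite filter_In in Hx, Hy.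
    rewrite <- (HP x y (proj1 Hx) (proj1 Hy) E), (proj2 Hx) in Hy; discriminate (proj2 Hy).
Qed.

Lemma length_le_image_card_mul {U V} Ud Vd (f : A -> U) (g : A -> V) l :
  NoDup l -> (forall x y, In x l -> In y l -> f x = f y -> g x = g y -> x = y) ->
  length l <= image_card Ud f l * image_card Vd g l.
Proof.
  intros Hl fg_inj; unfold image_card; rewrite <- length_prod.
  rewrite <- (length_map (fun x => (f x, g x)) l); apply NoDup_incl_length.
  - apply FinFun.Injective_map_NoDup_in; auto.
    intros x y Hx Hy E; injection E; auto.
  - intros [u v] Huv; rewrite in_map_iff in Huv; destruct Huv as [x [E Hx]].
    injection E; intros <- <-; apply in_prod_iff; rewrite !nodup_In; split; apply in_map; auto.
Qed.

Lemma exists_argmax_Z (h : A -> Z) l :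
  l <> [] -> exists p, In p l /\ forall q, In q l -> (h q <= h p)%Z.
Proof.
  induction l as [|a l IH]; intros Hl; [congruence|].
  destruct l as [|b l'].
  - exists a; split; [now left|]; intros q [<-|[]]; lia.
  - destruct (IH ltac:(discriminate)) as [p [Hp Hmax]].
    destruct (Z_le_gt_dec (h a) (h p)).
    + exists p; split; [now right|]; intros q [<-|Hq]; auto.
    + exists a; split; [now left|]; intros q [<-|Hq]; [lia|]; specialize (Hmax q Hq); lia.
Qed.

Lemma NoDup_constant_length_le_1 (m : list A) a :
  NoDup m -> (forall y, In y m -> y = a) -> length m <= 1.
Proof.
  intros Hm Ha; destruct m as [|x [|y m]]; simpl; auto.
  inversion Hm as [|? ? Hx]; subst; exfalso; apply Hx; left.
  rewrite (Ha x), (Ha y); simpl; auto.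
Qed.

(* A relation whose edges only join [x] to [nxt x] or [prv x], with [nxt]
   strictly raising a height [h]: its components are paths, and [f] is
   constant along them.  Removing a point of maximal height deletes at most
   the edge to its [prv]-neighbour, which then still represents its [f]-value. *)
Lemma pair_count_add_image_card_le {U} Ud (r : A -> A -> bool) (f : A -> U)
    (h : A -> Z) (nxt prv : A -> A) :
  (forall x y, r x y = r y x) ->
  (forall x y, r x y = true -> y = nxt x \/ y = prv x) ->
  (forall x, (h x < h (nxt x))%Z) ->
  (forall x, f (prv x) = f x) ->
  forall l, NoDup l -> pair_count r l + image_card Ud f l <= length l.
Proof.
  intros r_sym r_edge h_nxt f_prv l.
  induction l as [l IH] using (induction_ltof1 _ (@length A)); intros Hl.
  destruct l as [|a l0]; [reflexivity|].
  destruct (exists_argmax_Z h (a :: l0) ltac:(discriminate)) as [p [Hp Hmax]].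
  destruct (in_split _ _ Hp) as [l1 [l2 E]].
  set (l' := l1 ++ l2).
  assert (HP : Permutation (a :: l0) (p :: l')) by (rewrite E; symmetry; apply Permutation_middle).
  assert (Hin : forall x, In x (p :: l') -> In x (a :: l0))
    by (intros x; apply Permutation_in; symmetry; exact HP).
  rewrite (pair_count_Permutation r _ _ r_sym HP), (Permutation_length HP).
  rewrite (image_card_equiv Ud f _ (p :: l'))
    by (intros x; split; [apply Permutation_in, HP | apply Hin]).
  assert (Hpl : NoDup (p :: l')) by (eapply Permutation_NoDup; eauto).
  inversion Hpl as [|? ? Hp' Hl']; subst.
  assert (IHl' := IH l' ltac:(unfold ltof; rewrite (Permutation_length HP); simpl; lia) Hl').
  assert (Hprv : forall y, In y (filter (r p) l') -> y = prv p).
  { intros y Hy; apply filter_In in Hy; destruct Hy as [Hy Hry].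
    destruct (r_edge _ _ Hry) as [->| ->]; auto.
    specialize (Hmax _ (Hin _ (or_intror Hy))); specialize (h_nxt p); lia. }
  pose proof (NoDup_constant_length_le_1 _ _ (NoDup_filter (r p) Hl') Hprv).
  simpl pair_count; rewrite image_card_cons.
  destruct (in_dec Ud (f p) (map f l')) as [|Hnew]; simpl; [lia|].
  destruct (filter (r p) l') as [|y m] eqn:Hf; simpl in *; [lia|].
  exfalso; apply Hnew; rewrite <- f_prv, <- (Hprv y (or_introl eq_refl)).
  assert (Hy : In y (filter (r p) l')) by (rewrite Hf; now left).
  apply filter_In in Hy; apply in_map; tauto.
Qed.

End PairCount.
Open Scope R_scope.

Definition prod_eq_dec {X Y} (Xd : forall x y : X, {x = y} + {x <> y})
    (Yd : forall x y : Y, {x = y} + {x <> y}) : forall p q : X * Y, {p = q} + {p <> q}.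
Proof. decide equality. Defined.

Lemma two_mul_le_sqrt_mul_add x M a b :
  0 <= x -> x <= M -> x <= a * b -> 0 <= a -> 0 <= b -> 2 * x <= sqrt M * (a + b).
Proof.
  intros Hx HxM Hxab Ha Hb.
  assert (Hs := sqrt_pos M); assert (HsM := sqrt_sqrt M ltac:(lra)).
  destruct (Rle_or_lt (2 * x) (sqrt M * (a + b))) as [|Hlt]; [assumption|].
  assert (0 <= a * b) by (apply Rmult_le_pos; assumption).
  assert (x * x <= M * (a * b)) by (apply Rmult_le_compat; lra).
  assert (4 * (a * b) <= (a + b) * (a + b)) by (pose proof (pow2_ge_0 (a - b)); nra).
  assert (Hsq : (sqrt M * (a + b)) * (sqrt M * (a + b)) = M * ((a + b) * (a + b)))
    by (rewrite <- HsM at 3; ring).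
  assert (0 <= sqrt M * (a + b)) by nra.
  nra.
Qed.

Section LoomisWhitney.
Context {A X1 X2 X3 : Type}.
Variables (d1 : forall x y : X1, {x = y} + {x <> y}) (d2 : forall x y : X2, {x = y} + {x <> y})
  (d3 : forall x y : X3, {x = y} + {x <> y}).
Variables (f1 : A -> X1) (f2 : A -> X2) (f3 : A -> X3).
Hypothesis f_inj : forall x y, f1 x = f1 y -> f2 x = f2 y -> f3 x = f3 y -> x = y.

Let card12 := image_card (prod_eq_dec d1 d2) (fun x => (f1 x, f2 x)).
Let card13 := image_card (prod_eq_dec d1 d3) (fun x => (f1 x, f3 x)).
Let card23 := image_card (prod_eq_dec d2 d3) (fun x => (f2 x, f3 x)).
Let same3 (a x : A) : bool := if d3 (f3 x) (f3 a) then true else false.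

Lemma same3_eq a x : same3 a x = true <-> f3 x = f3 a.
Proof. unfold same3; destruct (d3 (f3 x) (f3 a)); split; congruence. Qed.

(* Split [l] into [f3]-fibres; on a fibre [F], AM-GM applied to
   [|F| <= card13 F * card23 F] and [|F| <= M] gives the bound. *)
Lemma fibres_bound (M : nat) l :
  NoDup l -> (forall a, In a l -> (length (filter (same3 a) l) <= M)%nat) ->
  2 * INR (length l) <= sqrt (INR M) * INR (card13 l + card23 l).
Proof.
  induction l as [l IH] using (induction_ltof1 _ (@length A)); intros Hl Hfib.
  destruct l as [|a l0].
  { unfold card13, card23, image_card; simpl; rewrite Rmult_0_r; lra. }
  set (l := a :: l0) in *.
  set (F := filter (same3 a) l); set (G := filter (fun x => negb (same3 a x)) l).
  assert (Hsplit : forall {U} Ud (g : A -> U * X3), (forall x, snd (g x) = f3 x) ->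
            image_card Ud g l = (image_card Ud g F + image_card Ud g G)%nat).
  { intros U Ud g Hg; apply image_card_filter_split; intros x y _ _ E.
    apply (f_equal snd) in E; rewrite !Hg in E; unfold same3; rewrite E; reflexivity. }
  unfold card13, card23.
  rewrite (Hsplit _ _ (fun x => (f1 x, f3 x)) (fun _ => eq_refl)),
    (Hsplit _ _ (fun x => (f2 x, f3 x)) (fun _ => eq_refl)).
  rewrite <- (filter_length (same3 a) l); fold F G.
  assert (HG : 2 * INR (length G) <= sqrt (INR M) * INR (card13 G + card23 G)).
  { apply IH.
    - unfold ltof, G; simpl; rewrite (proj2 (same3_eq a a) eq_refl); simpl.
      apply Nat.lt_succ_r, filter_length_le.
    - apply NoDup_filter, Hl.
    - intros x Hx; eapply Nat.le_trans; [|apply (Hfib x), (proj1 (proj1 (filter_In _ _ _) Hx))].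
      apply NoDup_incl_length; [do 2 apply NoDup_filter; exact Hl|].
      intros y; rewrite !filter_In; unfold G; rewrite filter_In; tauto. }
  assert (HF : 2 * INR (length F) <= sqrt (INR M) * INR (card13 F + card23 F)).
  { rewrite plus_INR; apply two_mul_le_sqrt_mul_add; try apply pos_INR.
    - apply le_INR, Hfib; now left.
    - rewrite <- mult_INR; apply le_INR, length_le_image_card_mul; [apply NoDup_filter, Hl|].
      intros x y _ _ E13 E23; injection E13; injection E23; intros; apply f_inj; auto. }
  unfold card13, card23 in HF, HG; rewrite !plus_INR, !Rmult_plus_distr_l in *; lra.
Qed.

Lemma loomis_whitney_weak l :
  NoDup l -> 4 * INR (length l) ^ 2 <= INR (card12 l) * INR (card13 l + card23 l) ^ 2.
Proof.
  intros Hl.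
  assert (H : 2 * INR (length l) <= sqrt (INR (card12 l)) * INR (card13 l + card23 l)).
  { apply fibres_bound; auto; intros a _.
    rewrite <- (image_card_injective (prod_eq_dec d1 d2) (fun x => (f1 x, f2 x))
                  (filter (same3 a) l)).
    - apply image_card_incl; intros x Hx; apply filter_In in Hx; tauto.
    - apply NoDup_filter, Hl.
    - intros x y Hx Hy E; rewrite filter_In, same3_eq in Hx, Hy.
      destruct Hx as [_ Hx], Hy as [_ Hy]; injection E; intros.
      apply f_inj; congruence. }
  assert (Hs := sqrt_sqrt _ (pos_INR (card12 l))); assert (Hs0 := sqrt_pos (INR (card12 l))).
  assert (0 <= INR (length l)) by apply pos_INR.
  rewrite <- Hs; nra.
Qed.

End LoomisWhitney.

Lemma pow3_lt_compat a b : 0 <= a -> a < b -> a ^ 3 < b ^ 3.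
Proof.
  intros Ha Hab.
  assert (E : b ^ 3 - a ^ 3 = (b - a) * (b * b + a * b + a * a)) by ring.
  assert (0 < b * b + a * b + a * a) by nra.
  assert (0 < (b - a) * (b * b + a * b + a * a)) by (apply Rmult_lt_0_compat; lra).
  lra.
Qed.

Lemma pow3_lt_reg a b : 0 <= b -> a ^ 3 < b ^ 3 -> a < b.
Proof.
  intros Hb Hab; destruct (Rlt_or_le a b) as [|Hba]; auto.
  assert (b ^ 3 <= a ^ 3) by (apply pow_incr; lra); lra.
Qed.

Lemma Rpower_pow_mul x p (n : nat) : 0 < x -> Rpower x p ^ n = Rpower x (p * INR n).
Proof. intros Hx; rewrite <- Rpower_pow by apply exp_pos; apply Rpower_mult. Qed.

Lemma Rpower_one_third_pow3 x : 0 < x -> Rpower x (1 / 3) ^ 3 = x.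
Proof.
  intros Hx; rewrite Rpower_pow_mul by exact Hx.
  replace (1 / 3 * INR 3) with 1 by (simpl; field); apply Rpower_1, Hx.
Qed.

Lemma Rpower_two_thirds_pow3 x : 0 < x -> Rpower x (2 / 3) ^ 3 = x ^ 2.
Proof.
  intros Hx; rewrite Rpower_pow_mul by exact Hx.
  replace (2 / 3 * INR 3) with (INR 2) by (simpl; field); apply Rpower_pow, Hx.
Qed.

(* AM-GM for the three numbers [c, (a+b)/2, (a+b)/2]. *)
Lemma three_Rpower_two_thirds_le n a b c :
  0 < n -> 0 <= a -> 0 <= b -> 0 <= c -> 4 * n ^ 2 <= c * (a + b) ^ 2 ->
  3 * Rpower n (2 / 3) <= a + b + c.
Proof.
  intros Hn Ha Hb Hc Hlw.
  set (u := (a + b) / 2).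
  assert (Hamgm : c * (u * u) <= ((a + b + c) / 3) ^ 3).
  { assert (E : ((a + b + c) / 3) ^ 3 - c * (u * u) = (c - u) ^ 2 * (c + 8 * u) / 27)
      by (unfold u; field).
    assert (0 <= (c - u) ^ 2 * (c + 8 * u) / 27).
    { apply Rmult_le_pos; [apply Rmult_le_pos; [apply pow2_ge_0 | unfold u; lra] | lra]. }
    lra. }
  assert (Hcube : Rpower n (2 / 3) ^ 3 <= ((a + b + c) / 3) ^ 3).
  { rewrite Rpower_two_thirds_pow3 by exact Hn; unfold u in Hamgm; nra. }
  destruct (Rle_or_lt (Rpower n (2 / 3)) ((a + b + c) / 3)) as [|Hlt]; [lra|].
  assert (0 <= (a + b + c) / 3) by lra.
  pose proof (pow3_lt_compat _ _ H Hlt); lra.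
Qed.

(* With [x = t^3], the constant [c = 3 (18 PI)^(1/3) / PI] satisfies [c < 3 t]
   and [c < 4 < t + 3], which is what the three cases need. *)
Lemma contact_bound_gt_max x :
  2 <= x ->
  Rmax (3 * x) (Rmax (5 * x - 3 * Rpower x (2 / 3)) (6 * x - 6 * Rpower x (2 / 3))) <
  6 * x - 3 * Rpower (18 * PI) (1 / 3) / PI * Rpower x (2 / 3).
Proof.
  intros Hx; set (T := Rpower x (2 / 3)).
  assert (Hpi : 3 < PI) by (pose proof PI2_3_2; lra).
  set (t := Rpower x (1 / 3)).
  assert (Ht3 : t ^ 3 = x) by (apply Rpower_one_third_pow3; lra).
  assert (Ht0 : 0 < t) by apply exp_pos.
  assert (HT : T = t ^ 2).
  { unfold T, t; rewrite Rpower_pow_mul by lra; f_equal; simpl; field. }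
  set (r := Rpower (18 * PI) (1 / 3)).
  assert (Hr3 : r ^ 3 = 18 * PI) by (apply Rpower_one_third_pow3; lra).
  assert (Hr0 : 0 < r) by apply exp_pos.
  assert (Hr_t : r < PI * t).
  { assert (18 < PI ^ 2 * x) by nra.
    apply pow3_lt_reg; [nra|]; rewrite Hr3, Rpow_mult_distr, Ht3.
    replace (PI ^ 3 * x) with (PI * (PI ^ 2 * x)) by ring; nra. }
  assert (Hr_4 : r < 4 / 3 * PI) by (apply pow3_lt_reg; nra).
  assert (Ht1 : 1 < t) by (apply pow3_lt_reg; nra).
  replace (3 * r / PI) with (3 * r * / PI) by reflexivity.
  assert (Hc_4 : 3 * r * / PI < 4).
  { apply (Rmult_lt_reg_r PI); [lra|]; rewrite Rmult_assoc, Rinv_l; lra. }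
  assert (Hc_t : 3 * r * / PI < 3 * t).
  { apply (Rmult_lt_reg_r PI); [lra|]; rewrite Rmult_assoc, Rinv_l; lra. }
  assert (0 < 3 * r * / PI) by (apply Rmult_lt_0_compat; [lra | apply Rinv_0_lt_compat; lra]).
  rewrite HT; rewrite <- Ht3 at 1 2 3 4.
  apply Rmax_lub_lt; [|apply Rmax_lub_lt]; nra.
Qed.

Definition Z3 := (Z * Z * Z)%type.
Definition zadd (u v : Z3) : Z3 :=
  let '(u1, u2, u3) := u in let '(v1, v2, v3) := v in (u1 + v1, u2 + v2, u3 + v3)%Z.
Definition zopp (u : Z3) : Z3 := let '(u1, u2, u3) := u in (- u1, - u2, - u3)%Z.
Definition zsub (u v : Z3) : Z3 := zadd u (zopp v).
Definition zscal (k : Z) (u : Z3) : Z3 := let '(u1, u2, u3) := u in (k * u1, k * u2, k * u3)%Z.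
Definition z0 : Z3 := (0, 0, 0)%Z.
Definition zdot (u v : Z3) : Z :=
  let '(u1, u2, u3) := u in let '(v1, v2, v3) := v in (u1 * v1 + u2 * v2 + u3 * v3)%Z.
Definition zcross (u v : Z3) : Z3 :=
  let '(u1, u2, u3) := u in let '(v1, v2, v3) := v in
  (u2 * v3 - u3 * v2, u3 * v1 - u1 * v3, u1 * v2 - u2 * v1)%Z.

Definition Z3_eq_dec : forall x y : Z3, {x = y} + {x <> y} :=
  prod_eq_dec (prod_eq_dec Z.eq_dec Z.eq_dec) Z.eq_dec.

Ltac z3_unfold :=
  repeat match goal with v : Z3 |- _ => destruct v as [[? ?] ?] end;
  cbv beta iota delta [zadd zopp zsub zscal zdot zcross z0] in *.

Ltac z3_lia :=
  z3_unfold;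
  repeat match goal with H : (_, _, _) = (_, _, _) |- _ => injection H; clear H; intros end;
  f_equal; [f_equal|]; lia.

Lemma zsub_eq_z0 u v : zsub u v = z0 -> v = u.
Proof. intros; z3_lia. Qed.

Lemma zadd_eq_z0 u v : zadd u v = z0 -> v = zopp u.
Proof. intros; z3_lia. Qed.

Lemma zscal_inj k x y : k <> 0%Z -> zscal k x = zscal k y -> x = y.
Proof.
  intros Hk E; z3_unfold; injection E; intros E3 E2 E1.
  apply Z.mul_reg_l in E1, E2, E3; auto; subst; reflexivity.
Qed.

Lemma zdot_self_pos d : d <> z0 -> (0 < zdot d d)%Z.
Proof.
  intros Hd; z3_unfold.
  destruct (Z.eq_dec z 0), (Z.eq_dec z1 0), (Z.eq_dec z2 0); subst; [now exfalso|..]; nia.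
Qed.

Lemma zdot_zadd_self_lt d x : d <> z0 -> (zdot x d < zdot (zadd x d) d)%Z.
Proof. intros Hd; pose proof (zdot_self_pos d Hd); z3_unfold; lia. Qed.

Lemma zdot_zsub_zcross_l u v x : zdot (zsub x u) (zcross u v) = zdot x (zcross u v).
Proof. z3_unfold; ring. Qed.

Lemma zdot_zsub_zcross_r u v x : zdot (zsub x u) (zcross v u) = zdot x (zcross v u).
Proof. z3_unfold; ring. Qed.

(* Cramer's rule, with [zdot da (zcross db dc)] the determinant of [da, db, dc]. *)
Lemma zscal_det_decomp da db dc z :
  zscal (zdot da (zcross db dc)) z =
  zadd (zadd (zscal (zdot z (zcross db dc)) da) (zscal (zdot z (zcross dc da)) db))
       (zscal (zdot z (zcross da db)) dc).
Proof. z3_unfold; f_equal; [f_equal|]; ring. Qed.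

Definition parity_class := (bool * bool * bool)%type.

Definition parity (z : Z3) : parity_class :=
  let '(a, b, c) := z in (Z.odd a, Z.odd b, Z.odd c).

Definition pxor (c d : parity_class) : parity_class :=
  let '(c1, c2, c3) := c in let '(d1, d2, d3) := d in (xorb c1 d1, xorb c2 d2, xorb c3 d3).

Definition pdet (a b c : parity_class) : bool :=
  let '(a1, a2, a3) := a in let '(b1, b2, b3) := b in let '(c1, c2, c3) := c in
  xorb (xorb (a1 && xorb (b2 && c3) (b3 && c2)) (a2 && xorb (b3 && c1) (b1 && c3)))
       (a3 && xorb (b1 && c2) (b2 && c1)).

Definition parity_class_eq_dec : forall c d : parity_class, {c = d} + {c <> d} :=
  prod_eq_dec (prod_eq_dec bool_dec bool_dec) bool_dec.

Definition parity_eqb (c d : parity_class) : bool :=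
  if parity_class_eq_dec c d then true else false.

Definition cl0 : parity_class := (false, false, false).
Definition cl1 : parity_class := (true, false, false).
Definition cl2 : parity_class := (false, true, false).
Definition cl12 : parity_class := (true, true, false).
Definition cl3 : parity_class := (false, false, true).
Definition cl13 : parity_class := (true, false, true).
Definition cl23 : parity_class := (false, true, true).
Definition cl123 : parity_class := (true, true, true).

Definition parity_classes : list parity_class := [cl0; cl1; cl2; cl12; cl3; cl13; cl23; cl123].

Lemma parity_zadd u v : parity (zadd u v) = pxor (parity u) (parity v).
Proof. z3_unfold; cbn; rewrite !Z.odd_add; reflexivity. Qed.

Lemma parity_zopp u : parity (zopp u) = parity u.
Proof. z3_unfold; cbn; rewrite !Z.odd_opp; reflexivity. Qed.

Lemma parity_zsub u v : parity (zsub u v) = pxor (parity u) (parity v).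
Proof. unfold zsub; rewrite parity_zadd, parity_zopp; reflexivity. Qed.

Lemma pxor_diag c : pxor c c = cl0.
Proof. destruct c as [[[] []] []]; reflexivity. Qed.

Lemma pxor_comm c d : pxor c d = pxor d c.
Proof. destruct c as [[[] []] []], d as [[[] []] []]; reflexivity. Qed.

Lemma parity_cl0_double z : parity z = cl0 -> exists w, z = zscal 2 w.
Proof.
  destruct z as [[a b] c]; cbn; intros E; injection E; intros Hc Hb Ha.
  exists (Z.div2 a, Z.div2 b, Z.div2 c); cbv beta iota delta [zscal].
  rewrite (Z.div2_odd a) at 1; rewrite (Z.div2_odd b) at 1; rewrite (Z.div2_odd c) at 1.
  rewrite Ha, Hb, Hc; cbn [Z.b2z]; f_equal; [f_equal|]; ring.
Qed.

Lemma Z_odd_zdot_zcross u v w :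
  Z.odd (zdot u (zcross v w)) = pdet (parity u) (parity v) (parity w).
Proof. z3_unfold; cbn; rewrite !Z.odd_add, !Z.odd_mul, !Z.odd_sub, !Z.odd_mul; reflexivity. Qed.

Lemma length_filter_by_parity {X} (P : X -> bool) (g : X -> parity_class) l :
  length (filter P l) =
  list_sum (map (fun c => length (filter (fun y => P y && parity_eqb (g y) c) l)) parity_classes).
Proof.
  induction l as [|a l IH]; [reflexivity|]; cbn [filter].
  destruct (P a); cbn [andb]; [|exact IH].
  rewrite length_cons, IH; destruct (g a) as [[[] []] []]; cbn; lia.
Qed.

Ltac pose_independent_triples H cs :=
  let rec go3 a b l :=
    lazymatch l with
    | [] => idtac
    | ?c :: ?l' =>
        let e := eval compute in (pdet a b c) in
        lazymatch e with
        | true => pose proof (H a b c eq_refl)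
        | false => idtac
        end; go3 a b l'
    end in
  let rec go2 a l := lazymatch l with [] => idtac | ?b :: ?l' => go3 a b l'; go2 a l' end in
  let rec go1 l := lazymatch l with [] => idtac | ?a :: ?l' => go2 a l'; go1 l' end in
  go1 cs.

(* Four points of the Fano plane always contain an independent triple, and
   six contain two disjoint ones. *)
Lemma fano_sum_bound (N : parity_class -> R) (n T : R) :
  (forall c, 0 <= N c <= n) ->
  ~ (0 < N cl1 /\ 0 < N cl2 /\ 0 < N cl12 /\ 0 < N cl3 /\ 0 < N cl13 /\ 0 < N cl23 /\
     0 < N cl123) ->
  (forall a b c, pdet a b c = true -> 0 < N a -> 0 < N b -> 0 < N c ->
     N a + N b + N c <= 3 * n - 3 * T) ->
  N cl1 + N cl2 + N cl12 + N cl3 + N cl13 + N cl23 + N cl123 <=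
  Rmax (3 * n) (Rmax (5 * n - 3 * T) (6 * n - 6 * T)).
Proof.
  intros HN Hnot Htri.
  pose proof (Rmax_l (3 * n) (Rmax (5 * n - 3 * T) (6 * n - 6 * T))).
  pose proof (Rmax_r (3 * n) (Rmax (5 * n - 3 * T) (6 * n - 6 * T))).
  pose proof (Rmax_l (5 * n - 3 * T) (6 * n - 6 * T)).
  pose proof (Rmax_r (5 * n - 3 * T) (6 * n - 6 * T)).
  pose_independent_triples Htri [cl1; cl2; cl12; cl3; cl13; cl23; cl123].
  pose proof (HN cl1); pose proof (HN cl2); pose proof (HN cl12); pose proof (HN cl3);
    pose proof (HN cl13); pose proof (HN cl23); pose proof (HN cl123).
  destruct (Rle_lt_or_eq_dec _ _ (proj1 (HN cl1))), (Rle_lt_or_eq_dec _ _ (proj1 (HN cl2))),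
    (Rle_lt_or_eq_dec _ _ (proj1 (HN cl12))), (Rle_lt_or_eq_dec _ _ (proj1 (HN cl3))),
    (Rle_lt_or_eq_dec _ _ (proj1 (HN cl13))), (Rle_lt_or_eq_dec _ _ (proj1 (HN cl23))),
    (Rle_lt_or_eq_dec _ _ (proj1 (HN cl123)));
  try (exfalso; apply Hnot; repeat split; assumption);
  repeat match goal with
  | H : 0 < ?x -> _, P : 0 < ?x |- _ => specialize (H P)
  | E : 0 = N ?c |- _ => rewrite <- E in *; clear E
  end;
  lra.
Qed.

Definition dotp (u v : pt) : R :=
  let '(u1, u2, u3) := u in let '(v1, v2, v3) := v in u1 * v1 + u2 * v2 + u3 * v3.

Section Lattice.
Variables b1 b2 b3 : pt.

Definition emb (z : Z3) : pt :=
  let '(k1, k2, k3) := z in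
  vadd (vadd (vscale (IZR k1) b1) (vscale (IZR k2) b2)) (vscale (IZR k3) b3).

Definition qf (z : Z3) : R := dotp (emb z) (emb z).
Definition bf (u v : Z3) : R := dotp (emb u) (emb v).

Ltac lattice_unfold :=
  z3_unfold; cbv beta iota delta [qf bf emb dotp];
  generalize b1 b2 b3; intros [[? ?] ?] [[? ?] ?] [[? ?] ?];
  cbv beta iota delta [vadd vscale]; rewrite ?plus_IZR, ?opp_IZR, ?mult_IZR, ?minus_IZR.

Ltac lattice_ring := lattice_unfold; ring.

Lemma qf_zsub_comm x y : qf (zsub x y) = qf (zsub y x).
Proof. lattice_ring. Qed.

Lemma qf_zscal2 x : qf (zscal 2 x) = 4 * qf x.
Proof. lattice_ring. Qed.

Lemma qf_parallelogram u v : qf (zadd u v) + qf (zsub u v) = 2 * qf u + 2 * qf v.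
Proof. lattice_ring. Qed.

Lemma qf_pm_pm u v w :
  qf (zadd (zadd u v) w) + qf (zsub (zadd u v) w) + qf (zadd (zsub u v) w) +
  qf (zsub (zsub u v) w) = 4 * (qf u + qf v + qf w).
Proof. lattice_ring. Qed.

Lemma qf_lin2 s t u v :
  qf (zadd (zscal s u) (zscal t v)) =
  IZR s * IZR s * qf u + IZR t * IZR t * qf v + 2 * IZR s * IZR t * bf u v.
Proof. lattice_ring. Qed.

Lemma qf_lin3 s t r u v w :
  qf (zadd (zadd (zscal s u) (zscal t v)) (zscal r w)) =
  IZR s * IZR s * qf u + IZR t * IZR t * qf v + IZR r * IZR r * qf w
  + 2 * IZR s * IZR t * bf u v + 2 * IZR s * IZR r * bf u w + 2 * IZR t * IZR r * bf v w.
Proof. lattice_ring. Qed.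

Lemma qf_z0 : qf z0 = 0.
Proof. lattice_ring. Qed.

Lemma qf_nonneg x : 0 <= qf x.
Proof. unfold qf; destruct (emb x) as [[a b] c]; cbn; nra. Qed.

Lemma emb_zsub x y : vadd (emb x) (vscale (-1) (emb y)) = emb (zsub x y).
Proof. lattice_unfold; f_equal; [f_equal|]; ring. Qed.

Lemma vnorm_emb x : vnorm (emb x) = sqrt (qf x).
Proof. unfold qf; destruct (emb x) as [[a b] c]; cbn; f_equal; ring. Qed.

Lemma emb_in_lattice z : in_lattice b1 b2 b3 (emb z).
Proof. destruct z as [[k1 k2] k3]; exists k1, k2, k3; reflexivity. Qed.

Lemma Forall_in_lattice_emb c : Forall (in_lattice b1 b2 b3) c -> exists zs, c = map emb zs.
Proof.
  induction 1 as [|p c (k1 & k2 & k3 & ->) _ [zs ->]].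
  - exists []; reflexivity.
  - exists ((k1, k2, k3) :: zs); reflexivity.
Qed.

Lemma emb_eq_vzero z : lin_indep3 b1 b2 b3 -> emb z = vzero -> z = z0.
Proof.
  intros Hli E; destruct z as [[k1 k2] k3].
  destruct (Hli (IZR k1) (IZR k2) (IZR k3) E) as (E1 & E2 & E3).
  apply eq_IZR_R0 in E1, E2, E3; subst; reflexivity.
Qed.

Lemma qf_min_of_min_norm_two :
  lin_indep3 b1 b2 b3 -> min_norm_two b1 b2 b3 -> forall z, z <> z0 -> 4 <= qf z.
Proof.
  intros Hli [Hmin _] z Hz.
  assert (Hnorm := Hmin _ (emb_in_lattice z) (fun E => Hz (emb_eq_vzero z Hli E))).
  rewrite vnorm_emb in Hnorm.
  assert (Hs := sqrt_sqrt _ (qf_nonneg z)); nra.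
Qed.

Section Minimum.
Hypothesis qf_min : forall z, z <> z0 -> 4 <= qf z.

Lemma qf_parity_cl0 z : parity z = cl0 -> z = z0 \/ 16 <= qf z.
Proof.
  intros Hz; destruct (parity_cl0_double z Hz) as [w ->].
  destruct (Z3_eq_dec w z0) as [->|Hw]; [now left|].
  right; rewrite qf_zscal2; specialize (qf_min w Hw); lra.
Qed.

Lemma minimal_parity_neq_cl0 z : qf z = 4 -> parity z <> cl0.
Proof.
  intros Hz Hc; destruct (qf_parity_cl0 z Hc) as [->|]; [rewrite qf_z0 in Hz|]; lra.
Qed.

Lemma minimal_same_parity u v :
  qf u = 4 -> qf v = 4 -> parity u = parity v -> v = u \/ v = zopp u.
Proof.
  intros Hu Hv Huv.
  destruct (qf_parity_cl0 (zsub u v)) as [E|E1];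
    [rewrite parity_zsub, Huv; apply pxor_diag | left; apply zsub_eq_z0, E |].
  destruct (qf_parity_cl0 (zadd u v)) as [E|E2];
    [rewrite parity_zadd, Huv; apply pxor_diag | right; apply zadd_eq_z0, E |].
  pose proof (qf_parallelogram u v); lra.
Qed.

(* The four vectors [u ± v ± w] are even, hence [z0] or of norm at least 16,
   while their norms add up to 48. *)
Lemma minimal_fano u v w :
  qf u = 4 -> qf v = 4 -> qf w = 4 -> pxor (pxor (parity u) (parity v)) (parity w) = cl0 ->
  exists s t, (s = 1 \/ s = -1)%Z /\ (t = 1 \/ t = -1)%Z /\ w = zadd (zscal s u) (zscal t v).
Proof.
  intros Hu Hv Hw Hc.
  destruct (qf_parity_cl0 (zadd (zadd u v) w)) as [E|E1];
    [rewrite !parity_zadd; exact Hc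
    | exists (-1)%Z, (-1)%Z; split; [now right | split; [now right | z3_lia]] |].
  destruct (qf_parity_cl0 (zsub (zadd u v) w)) as [E|E2];
    [rewrite parity_zsub, parity_zadd; exact Hc
    | exists 1%Z, 1%Z; split; [now left | split; [now left | z3_lia]] |].
  destruct (qf_parity_cl0 (zadd (zsub u v) w)) as [E|E3];
    [rewrite parity_zadd, parity_zsub; exact Hc
    | exists (-1)%Z, 1%Z; split; [now right | split; [now left | z3_lia]] |].
  destruct (qf_parity_cl0 (zsub (zsub u v) w)) as [E|E4];
    [rewrite !parity_zsub; exact Hc
    | exists 1%Z, (-1)%Z; split; [now left | split; [now right | z3_lia]] |].
  pose proof (qf_pm_pm u v w); lra.
Qed.

Lemma minimal_bf_pm2 u v w :
  qf u = 4 -> qf v = 4 -> qf w = 4 -> pxor (pxor (parity u) (parity v)) (parity w) = cl0 ->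
  bf u v = 2 \/ bf u v = -2.
Proof.
  intros Hu Hv Hw Hc.
  destruct (minimal_fano u v w Hu Hv Hw Hc) as (s & t & Hs & Ht & ->).
  rewrite qf_lin2, Hu, Hv in Hw.
  destruct Hs as [->| ->], Ht as [->| ->]; cbn in Hw; lra.
Qed.

(* With [d12 = ± d1 ± d2] and [d123 = ± d12 ± d3], the norm of [d123] is
   12 plus three terms [± 4], which is never 4. *)
Lemma not_all_classes_minimal :
  ~ (forall c, c <> cl0 -> exists d, qf d = 4 /\ parity d = c).
Proof.
  intros Hall.
  destruct (Hall cl1 ltac:(discriminate)) as (d1 & Q1 & K1).
  destruct (Hall cl2 ltac:(discriminate)) as (d2 & Q2 & K2).
  destruct (Hall cl12 ltac:(discriminate)) as (d12 & Q12 & K12).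
  destruct (Hall cl3 ltac:(discriminate)) as (d3 & Q3 & K3).
  destruct (Hall cl13 ltac:(discriminate)) as (d13 & Q13 & K13).
  destruct (Hall cl23 ltac:(discriminate)) as (d23 & Q23 & K23).
  destruct (Hall cl123 ltac:(discriminate)) as (d123 & Q123 & K123).
  assert (B12 := minimal_bf_pm2 d1 d2 d12 Q1 Q2 Q12 ltac:(rewrite K1, K2, K12; reflexivity)).
  assert (B13 := minimal_bf_pm2 d1 d3 d13 Q1 Q3 Q13 ltac:(rewrite K1, K3, K13; reflexivity)).
  assert (B23 := minimal_bf_pm2 d2 d3 d23 Q2 Q3 Q23 ltac:(rewrite K2, K3, K23; reflexivity)).
  destruct (minimal_fano d1 d2 d12 Q1 Q2 Q12 ltac:(rewrite K1, K2, K12; reflexivity))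
    as (s & t & Hs & Ht & E12).
  destruct (minimal_fano d12 d3 d123 Q12 Q3 Q123 ltac:(rewrite K12, K3, K123; reflexivity))
    as (s' & t' & Hs' & Ht' & E123).
  assert (E : d123 = zadd (zadd (zscal (s' * s) d1) (zscal (s' * t) d2)) (zscal t' d3))
    by (subst; z3_lia).
  rewrite E, qf_lin3, Q1, Q2, Q3, !mult_IZR in Q123.
  destruct Hs as [->| ->], Ht as [->| ->], Hs' as [->| ->], Ht' as [->| ->],
    B12 as [B12|B12], B13 as [B13|B13], B23 as [B23|B23];
    rewrite B12, B13, B23 in Q123; cbn in Q123; lra.
Qed.

Definition touch (x y : Z3) : bool := touchb (emb x) (emb y).

Lemma touch_true x y : touch x y = true <-> qf (zsub x y) = 4.
Proof.
  unfold touch, touchb, dist3; rewrite emb_zsub, vnorm_emb.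
  assert (Hs := sqrt_sqrt _ (qf_nonneg (zsub x y))).
  destruct (Req_EM_T _ 2) as [E|E]; split; intros H; auto; try discriminate.
  - rewrite E in Hs; lra.
  - exfalso; apply E; rewrite H; replace 4 with (2 * 2) by ring; apply sqrt_square; lra.
Qed.

Lemma touch_comm x y : touch x y = touch y x.
Proof.
  apply Bool.eq_true_iff_eq; rewrite !touch_true, qf_zsub_comm; reflexivity.
Qed.

Lemma contact_number_map_emb zs : contact_number (map emb zs) = pair_count touch zs.
Proof.
  induction zs as [|z zs IH]; cbn; auto.
  rewrite IH, filter_map_swap, length_map; reflexivity.
Qed.

Definition touch_in (c : parity_class) (x y : Z3) : bool :=
  touch x y && parity_eqb (parity (zsub x y)) c.

Definition class_count (c : parity_class) (l : list Z3) : nat := pair_count (touch_in c) l.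

Lemma touch_in_comm c x y : touch_in c x y = touch_in c y x.
Proof. unfold touch_in; rewrite touch_comm, !parity_zsub, pxor_comm; reflexivity. Qed.

Lemma pair_count_touch l :
  pair_count touch l = list_sum (map (fun c => class_count c l) parity_classes).
Proof.
  induction l as [|a l IH]; [reflexivity|].
  cbn [pair_count]; rewrite IH, (length_filter_by_parity (touch a) (fun y => parity (zsub a y))).
  unfold class_count, touch_in; cbn; lia.
Qed.

Lemma parity_eqb_true c d : parity_eqb c d = true <-> c = d.
Proof. unfold parity_eqb; destruct (parity_class_eq_dec c d); split; congruence. Qed.

Lemma touch_in_true c x y :
  touch_in c x y = true <-> qf (zsub x y) = 4 /\ parity (zsub x y) = c.
Proof. unfold touch_in; rewrite andb_true_iff, touch_true, parity_eqb_true; reflexivity. Qed.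

Lemma class_count_cl0 l : class_count cl0 l = 0%nat.
Proof.
  apply pair_count_false; intros x y.
  destruct (touch_in cl0 x y) eqn:E; auto.
  apply touch_in_true in E; destruct E as [Hq Hc].
  exfalso; exact (minimal_parity_neq_cl0 _ Hq Hc).
Qed.

Lemma class_count_pos_minimal c l :
  (0 < class_count c l)%nat -> exists d, qf d = 4 /\ parity d = c.
Proof.
  intros Hpos; destruct (pair_count_pos _ _ Hpos) as (x & y & _ & _ & E).
  exists (zsub x y); apply touch_in_true, E.
Qed.

Lemma touch_in_minimal c d x y :
  qf d = 4 -> parity d = c -> touch_in c x y = true -> y = zadd x d \/ y = zsub x d.
Proof.
  intros Hd Hc E; apply touch_in_true in E; destruct E as [Hq Hxy].
  destruct (minimal_same_parity d (zsub x y) Hd Hq ltac:(congruence)) as [E|E];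
    [right | left]; z3_lia.
Qed.

(* Contacts of class [c] join [x] to [x ± d], so they run along lines parallel
   to [d], on which [f] is constant. *)
Lemma class_count_add_image_card_le {U} Ud (f : Z3 -> U) c d l :
  qf d = 4 -> parity d = c -> (forall x, f (zsub x d) = f x) -> NoDup l ->
  (class_count c l + image_card Ud f l <= length l)%nat.
Proof.
  intros Hd Hc Hf; apply (pair_count_add_image_card_le Ud _ f (fun z => zdot z d)
    (fun z => zadd z d) (fun z => zsub z d)); auto.
  - apply touch_in_comm.
  - intros x y; apply touch_in_minimal; assumption.
  - intros x; apply zdot_zadd_self_lt; intros ->; rewrite qf_z0 in Hd; lra.
Qed.

Lemma class_count_le c l : NoDup l -> (class_count c l <= length l)%nat.
Proof.
  intros Hl; destruct (Nat.eq_0_gt_0_cases (class_count c l)) as [->|Hpos]; [lia|].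
  destruct (class_count_pos_minimal c l Hpos) as (d & Hd & Hc).
  pose proof (class_count_add_image_card_le bool_dec (fun _ => true) c d l Hd Hc
    (fun _ => eq_refl) Hl); lia.
Qed.

(* For independent classes the three minimal vectors form a basis of a
   sublattice (their determinant is odd), so the lines of each class are the
   fibres of a projection to a coordinate plane of that basis. *)
Lemma class_count_independent_triple a b c l :
  pdet a b c = true -> NoDup l -> l <> [] ->
  (0 < class_count a l)%nat -> (0 < class_count b l)%nat -> (0 < class_count c l)%nat ->
  INR (class_count a l) + INR (class_count b l) + INR (class_count c l) <=
  3 * INR (length l) - 3 * Rpower (INR (length l)) (2 / 3).
Proof.
  intros Habc Hl Hne Pa Pb Pc.
  destruct (class_count_pos_minimal a l Pa) as (da & Hda & Hca).
  destruct (class_count_pos_minimal b l Pb) as (db & Hdb & Hcb).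
  destruct (class_count_pos_minimal c l Pc) as (dc & Hdc & Hcc).
  set (w1 := fun z => zdot z (zcross db dc)).
  set (w2 := fun z => zdot z (zcross dc da)).
  set (w3 := fun z => zdot z (zcross da db)).
  assert (Hdet : zdot da (zcross db dc) <> 0%Z).
  { intros E; pose proof (Z_odd_zdot_zcross da db dc) as O.
    rewrite E, Hca, Hcb, Hcc, Habc in O; discriminate. }
  assert (Hinj : forall x y, w1 x = w1 y -> w2 x = w2 y -> w3 x = w3 y -> x = y).
  { intros x y E1 E2 E3; apply (zscal_inj _ _ _ Hdet).
    rewrite (zscal_det_decomp da db dc x), (zscal_det_decomp da db dc y).
    unfold w1, w2, w3 in *; rewrite E1, E2, E3; reflexivity. }
  assert (La := class_count_add_image_card_le (prod_eq_dec Z.eq_dec Z.eq_dec)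
    (fun z => (w2 z, w3 z)) a da l Hda Hca
    ltac:(intros x; unfold w2, w3; rewrite zdot_zsub_zcross_l, zdot_zsub_zcross_r; reflexivity) Hl).
  assert (Lb := class_count_add_image_card_le (prod_eq_dec Z.eq_dec Z.eq_dec)
    (fun z => (w1 z, w3 z)) b db l Hdb Hcb
    ltac:(intros x; unfold w1, w3; rewrite zdot_zsub_zcross_l, zdot_zsub_zcross_r; reflexivity) Hl).
  assert (Lc := class_count_add_image_card_le (prod_eq_dec Z.eq_dec Z.eq_dec)
    (fun z => (w1 z, w2 z)) c dc l Hdc Hcc
    ltac:(intros x; unfold w1, w2; rewrite zdot_zsub_zcross_l, zdot_zsub_zcross_r; reflexivity) Hl).
  assert (LW := loomis_whitney_weak Z.eq_dec Z.eq_dec Z.eq_dec w1 w2 w3 Hinj l Hl).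
  assert (Hn : 0 < INR (length l)) by (apply lt_0_INR; destruct l; [congruence | cbn; lia]).
  pose proof (three_Rpower_two_thirds_le _ _ _ _ Hn (pos_INR _) (pos_INR _) (pos_INR _)
    ltac:(rewrite <- plus_INR; exact LW)).
  apply le_INR in La, Lb, Lc; rewrite plus_INR in La, Lb, Lc; lra.
Qed.

End Minimum.
End Lattice.

Theorem theorem1 (b1 b2 b3 : pt) (n : nat) :
  lin_indep3 b1 b2 b3 ->
  min_norm_two b1 b2 b3 ->
  (2 <= n)%nat ->
  forall c : list pt,
    length c = n ->
    lattice_packing b1 b2 b3 c ->
    INR (contact_number c) <
      6 * INR n - 3 * Rpower (18 * PI) (1 / 3) / PI * Rpower (INR n) (2 / 3).
Proof.
  intros Hli Hmin Hn c Hlen [[Hnd _] Hlat].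
  destruct (Forall_in_lattice_emb b1 b2 b3 c Hlat) as [zs ->].
  apply NoDup_map_inv in Hnd; rewrite length_map in Hlen; subst n.
  pose proof (qf_min_of_min_norm_two b1 b2 b3 Hli Hmin) as Hq.
  set (N := fun c => INR (class_count b1 b2 b3 c zs)).
  assert (HN : forall c, 0 <= N c <= INR (length zs))
    by (intros c; split; [apply pos_INR | apply le_INR, class_count_le; assumption]).
  assert (Hnot7 : ~ (0 < N cl1 /\ 0 < N cl2 /\ 0 < N cl12 /\ 0 < N cl3 /\ 0 < N cl13 /\
                     0 < N cl23 /\ 0 < N cl123)).
  { intros Hpos; apply (not_all_classes_minimal b1 b2 b3 Hq); intros k Hk.
    apply (class_count_pos_minimal b1 b2 b3 k zs), (INR_lt 0).
    destruct k as [[[] []] []]; [tauto .. | now contradiction Hk]. }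
  assert (Htri : forall a b c, pdet a b c = true -> 0 < N a -> 0 < N b -> 0 < N c ->
            N a + N b + N c <= 3 * INR (length zs) - 3 * Rpower (INR (length zs)) (2 / 3)).
  { intros a b k Habk Pa Pb Pk; apply class_count_independent_triple;
      auto using INR_lt; destruct zs; cbn in Hn; [lia | discriminate]. }
  pose proof (fano_sum_bound N _ _ HN Hnot7 Htri).
  pose proof (contact_bound_gt_max (INR (length zs)) (le_INR 2 _ Hn)).
  rewrite contact_number_map_emb, pair_count_touch; unfold parity_classes.
  cbn [map list_sum fold_right].
  rewrite class_count_cl0, !plus_INR, INR_0 by exact Hq; unfold N in *; cbn beta in *; lra.
Qed.
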